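(* Assume (A1). Let $g:\mathcal X\to\mathbb R$ and let $u$ be the solution of problem (P) with boundary data $g|_\Gamma$. For $x\in\mathcal X$ let $(X_i)_{i\ge0}$ be the stochastic process started at $X_0=x$ defined as follows: given $X_i$, if $X_i\in\Gamma$ set $X_{i+1}=X_i$; otherwise, independently of everything else, with probability $\alpha$ take $X_{i+1}=y$ with probability $w_{X_iy}/d_{X_i}$, with probability $\frac12(1-\alpha)$ take $X_{i+1}\in\operatorname{argmax}_{y\in N_{X_i}}u(y)$, and with probability $\frac12(1-\alpha)$ take $X_{i+1}\in\operatorname{argmin}_{y\in N_{X_i}\cap\Gamma}g(y)$. Let $\tau=\inf\{i\ge0: X_i\in\Gamma\}$. Then $$u(x)-g(x)\le\mathbb E\big[g(X_\tau)-g(x)\mid X_0=x\big].$$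
   Context: $\mathcal X$ is a finite vertex set and $W=(w_{xy})$ a symmetric matrix of nonnegative weights defining a connected graph, with degrees $d_x=\sum_{y}w_{xy}$ and neighbor sets $N_x=\{y\in\mathcal X:w_{xy}>0\}$. For $p\ge2$, $\alpha=1/(p-1)$, and $$\mathcal L_p u(x)=\alpha\,\frac{1}{d_x}\sum_{y}w_{xy}\big(u(x)-u(y)\big)+(1-\alpha)\Big(u(x)-\tfrac12\big(\max_{N_x}u+\min_{N_x}u\big)\Big).$$ $\Gamma\subset\mathcal X$ is the set of labeled vertices. Problem (P): find $u:\mathcal X\to\mathbb R$ with $\mathcal L_pu(x)=0$ for $x\in\mathcal X\setminus\Gamma$ and $u=g$ on $\Gamma$; since the graph is connected it has a unique solution. Assumption (A1): $\Gamma\cap N_x\neq\varnothing$ for every $x\in\mathcal X$. *)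

From HB Require Import structures.
From mathcomp Require Import all_boot all_order all_algebra.
From mathcomp Require Import all_classical all_reals all_analysis.
Set Implicit Arguments. Unset Strict Implicit. Unset Printing Implicit Defensive.
Import Order.TTheory GRing.Theory Num.Theory.
Local Open Scope ring_scope.

Section Graph.
Variables (R : realType) (T : finType) (W : T -> T -> R).

Definition deg (x : T) : R := \sum_(y : T) W x y.

Definition nbrs (x : T) : {set T} := [set y | 0 < W x y].

Definition weighted_connected_graph : Prop :=
  [/\ forall x y, W x y = W y x,
      forall x y, 0 <= W x y &
      forall x y, connect [rel a b | 0 < W a b] x y].

(* max_{N_x} u and min_{N_x} u (seeded with an element of N_x when nonempty) *)
Definition maxN (u : T -> R) (x : T) : R :=
  \big[Num.max/u (odflt x [pick y in nbrs x])]_(y in nbrs x) u y.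
Definition minN (u : T -> R) (x : T) : R :=
  \big[Num.min/u (odflt x [pick y in nbrs x])]_(y in nbrs x) u y.

Definition Lp (p : R) (u : T -> R) (x : T) : R :=
  let alpha := 1 / (p - 1) in
  alpha * ((deg x)^-1 * \sum_(y : T) W x y * (u x - u y))
  + (1 - alpha) * (u x - (maxN u x + minN u x) / 2).

Definition solves_P (p : R) (Gamma : {set T}) (g u : T -> R) : Prop :=
  (forall x, x \notin Gamma -> Lp p u x = 0) /\
  (forall x, x \in Gamma -> u x = g x).

Definition A1 (Gamma : {set T}) : Prop :=
  forall x, exists y, y \in Gamma :&: nbrs x.

(* One-step transition probabilities of the process, given selections
   a x in argmax_{N_x} u and b x in argmin_{N_x cap Gamma} g. *)
Definition trans (p : R) (Gamma : {set T}) (a b : T -> T) (x y : T) : R :=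
  let alpha := 1 / (p - 1) in
  if x \in Gamma then (x == y)%:R
  else alpha * (W x y / deg x)
       + (1 - alpha) / 2 * (y == a x)%:R
       + (1 - alpha) / 2 * (y == b x)%:R.

(* probability that (X_0, ..., X_n) = s, given X_0 = x *)
Definition path_prob (p : R) (Gamma : {set T}) (a b : T -> T) (x : T)
    (n : nat) (s : {ffun 'I_n.+1 -> T}) : R :=
  (s ord0 == x)%:R *
  \prod_(i < n) trans p Gamma a b (s (widen_ord (leqnSn n) i)) (s (lift ord0 i)).

(* g(X_tau) * 1_{tau <= n} evaluated on the path s (tau = first hitting time of Gamma) *)
Definition stopped_value (Gamma : {set T}) (g : T -> R) (x : T)
    (n : nat) (s : {ffun 'I_n.+1 -> T}) : R :=
  let l := [seq s i | i <- enum 'I_n.+1] in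
  let inG := fun y : T => y \in Gamma in
  if has inG l then g (nth x l (find inG l)) else 0.

Definition stopped_exp (p : R) (Gamma : {set T}) (a b : T -> T) (g : T -> R)
    (x : T) (n : nat) : R :=
  \sum_(s : {ffun 'I_n.+1 -> T})
     path_prob p Gamma a b x s * stopped_value Gamma g x s.

End Graph.

From HB Require Import structures.
From mathcomp Require Import all_boot all_order all_algebra.
From mathcomp Require Import all_classical all_reals all_analysis.
From mathcomp Require Import ring lra.
Import Order.TTheory GRing.Theory Num.Theory.
Import numFieldNormedType.Exports.
Local Open Scope classical_set_scope.
Local Open Scope ring_scope.
Set Implicit Arguments. Unset Strict Implicit. Unset Printing Implicit Defensive.

(* Let Q f y := f y on Gamma and Q f y := sum_z P(y, z) f z off Gamma be the
   transition operator of the chain absorbed in Gamma. First-step analysis on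
   path space shows E[g(X_tau); tau <= n] = (Q^n (g 1_Gamma))(x). From every
   y outside Gamma the chain jumps into Gamma (to b y) with probability at least
   1 - q > 0, so Q^n f - Q^n h = O(q^n) whenever f = h on Gamma; this gives the
   limit l. The equation L_p u = 0, with a y maximising u and b y a neighbour
   of y, makes u subharmonic for Q, so u <= Q^n u = Q^n (g 1_Gamma) + O(q^n)
   because u = g on Gamma, and u(x) <= l in the limit. *)

Lemma cvgn_geometric_increments (R : realType) (v : R ^nat) (M q : R) :
  0 <= q < 1 -> (forall n, `|v n.+1 - v n| <= M * q ^+ n) -> cvgn v.
Proof.
move=> /andP[q_ge0 q_lt1] v_incr.
have M_ge0 : 0 <= M by have := v_incr 0%N; rewrite expr0 mulr1; apply: le_trans.
have abs_incr : cvgn [normed series (telescope v)].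
  apply: (@series_le_cvg _ _ (geometric M q)) => [n|n|n|] //=.
  - exact: mulr_ge0 (exprn_ge0 _ q_ge0).
  - exact: v_incr.
  - by apply: is_cvg_geometric_series; rewrite ger0_norm.
have -> : v = (fun=> v 0%N) + series (telescope v).
  by apply/funext => n; rewrite [LHS]eq_sum_telescope.
exact: is_cvgD (is_cvg_cst _) (normed_cvg abs_incr).
Qed.

Lemma uniform_lt1_bound (R : realType) (T : finType) (P : pred T) (f : T -> R) :
  (forall z, P z -> f z < 1) -> exists2 q, 0 <= q < 1 & forall z, P z -> f z <= q.
Proof.
move=> f_lt1; exists (\big[Num.max/0]_(z | P z) f z).
  apply/andP; split; first by elim/big_rec: _ => // z v _ v_ge0; rewrite le_max v_ge0 orbT.
  apply: (big_ind (fun v => v < 1)) => //.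
  by move=> v w v1 w1; rewrite gt_max v1 w1.
by move=> z Pz; rewrite (bigD1 z) //= le_max lexx.
Qed.

Lemma normr_le_sum_norm (R : numDomainType) (T : finType) (f : T -> R) z :
  `|f z| <= \sum_y `|f y|.
Proof. by rewrite (bigD1 z) //= lerDl sumr_ge0. Qed.

Lemma sum_mul_indicator (R : comPzRingType) (T : finType) (c : R) (z : T) (f : T -> R) :
  \sum_y c * (y == z)%:R * f y = c * f z.
Proof.
by rewrite (bigD1 z) //= eqxx mulr1 big1 ?addr0 // => y /negPf ->; rewrite mulr0 mul0r.
Qed.

Section Absorption.
Variables (R : realType) (T : finType) (Gamma : {set T}) (tr : T -> T -> R).

Definition absorb (f : T -> R) (y : T) : R :=
  if y \in Gamma then f y else \sum_z tr y z * f z.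

Lemma iter_absorb_in n f y : y \in Gamma -> iter n absorb f y = f y.
Proof. by move=> yG; elim: n => //= n IH; rewrite /absorb yG. Qed.

Hypothesis tr_ge0 : forall x y, 0 <= tr x y.

Lemma le_absorb f h : (forall z, f z <= h z) -> forall y, absorb f y <= absorb h y.
Proof.
move=> le_fh y; rewrite /absorb; case: ifP => _ //.
by apply: ler_sum => z _; apply: ler_wpM2l.
Qed.

Lemma le_iter_absorb f : (forall y, f y <= absorb f y) -> forall n y, f y <= iter n absorb f y.
Proof.
move=> f_sub; elim=> //= n IH y.
exact: le_trans (f_sub y) (le_absorb IH y).
Qed.

Hypothesis tr_sum1 : forall x, \sum_y tr x y = 1.
Variables (b : T -> T) (q : R).
Hypothesis b_in : forall x, x \notin Gamma -> b x \in Gamma.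
Hypothesis escape : forall x, x \notin Gamma -> 1 - tr x (b x) <= q.
Hypothesis q_ge0 : 0 <= q.

(* Off [Gamma] the two iterates differ only through the mass that does not
   jump to [b y], where they agree. *)
Lemma iter_absorb_contract f h (M : R) : (forall z, z \in Gamma -> f z = h z) ->
    (forall z, `|f z - h z| <= M) ->
  forall n y, `|iter n absorb f y - iter n absorb h y| <= M * q ^+ n.
Proof.
move=> eq_fh le_fhM n y; have M_ge0 : 0 <= M := le_trans (normr_ge0 _) (le_fhM y).
elim: n y => [|n IH] y; first by rewrite mulr1.
have [yG|yNG] := boolP (y \in Gamma).
  by rewrite !iter_absorb_in // eq_fh // subrr normr0 mulr_ge0 ?exprn_ge0.
rewrite /= /absorb (negbTE yNG) -sumrB.
rewrite (bigD1 (b y)) //= !iter_absorb_in ?b_in // eq_fh ?b_in // -mulrBr subrr mulr0 add0r.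
apply: le_trans (ler_norm_sum _ _ _) _.
apply: (@le_trans _ _ (\sum_(z | z != b y) tr y z * (M * q ^+ n))).
  by apply: ler_sum => z _; rewrite -mulrBr normrM ger0_norm // ler_wpM2l.
rewrite -big_distrl /= exprS mulrCA.
have -> : \sum_(z | z != b y) tr y z = 1 - tr y (b y).
  by rewrite -(tr_sum1 y) [in RHS](bigD1 (b y)) //= addrC addrK.
by rewrite ler_wpM2l // ler_wpM2r ?exprn_ge0 ?escape.
Qed.

Hypothesis q_lt1 : q < 1.

Lemma iter_absorb_cvg f y : cvgn (fun n => iter n absorb f y).
Proof.
apply: (@cvgn_geometric_increments _ _ (\sum_z `|absorb f z - f z|) q); first by rewrite q_ge0.
move=> n; rewrite iterSr.
apply: iter_absorb_contract => [z zG|z]; last exact: normr_le_sum_norm.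
by rewrite /absorb zG.
Qed.

Lemma le_lim_iter_absorb f h y : (forall z, f z <= absorb f z) ->
    (forall z, z \in Gamma -> f z = h z) ->
  f y <= lim (iter n absorb h y @[n --> \oo]).
Proof.
move=> f_sub eq_fh; set M := \sum_z `|f z - h z|.
have cvg_geo : geometric M q @ \oo --> 0 by apply: cvg_geometric; rewrite ger0_norm.
have lim_geo : lim (geometric M q @ \oo) = 0 by apply: cvg_lim.
have cvg_h := @iter_absorb_cvg h y.
rewrite -[X in _ <= X]addr0 -lim_geo -limD //; last exact: cvgP cvg_geo.
apply: limr_ge; first by apply: is_cvgD => //; exact: cvgP cvg_geo.
apply: nearW => n; rewrite fctE /=.
have := iter_absorb_contract eq_fh (normr_le_sum_norm (fun z => f z - h z)) n y.
rewrite ler_norml => /andP[_].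
have := le_iter_absorb f_sub n y; rewrite /M; lra.
Qed.

End Absorption.

Section FfunCons.
Variables (T : finType) (n : nat).

Definition fcons (y : T) (t : {ffun 'I_n.+1 -> T}) : {ffun 'I_n.+2 -> T} :=
  [ffun i => if unlift ord0 i is Some j then t j else y].

Lemma fcons0 y t : fcons y t ord0 = y.
Proof. by rewrite ffunE unlift_none. Qed.

Lemma fconsS y t j : fcons y t (lift ord0 j) = t j.
Proof. by rewrite ffunE liftK. Qed.

Lemma big_ffunS (V : nmodType) (F : {ffun 'I_n.+2 -> T} -> V) :
  \sum_s F s = \sum_y \sum_t F (fcons y t).
Proof.
rewrite pair_big /= (reindex (fun yt : T * _ => fcons yt.1 yt.2)) //.
exists (fun s : {ffun 'I_n.+2 -> T} => (s ord0, [ffun j : 'I_n.+1 => s (lift ord0 j)])) => [[y t] _|s _] /=.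
  by rewrite fcons0; congr pair; apply/ffunP => j; rewrite ffunE fconsS.
apply/ffunP => i; rewrite ffunE.
by case: unliftP => [j ->|->]; rewrite ?ffunE.
Qed.

End FfunCons.

Lemma big_ffun1 (T : finType) (V : nmodType) (F : {ffun 'I_1 -> T} -> V) :
  \sum_s F s = \sum_y F [ffun=> y].
Proof.
rewrite (reindex (fun y => [ffun=> y])) //.
exists (fun s : {ffun 'I_1 -> T} => s ord0) => [y _|s _]; first by rewrite ffunE.
by apply/ffunP => i; rewrite ffunE (ord1 i).
Qed.

Section StoppedValue.
Variables (R : realType) (T : finType) (Gamma : {set T}) (g : T -> R).

Lemma stopped_value0 x (s : {ffun 'I_1 -> T}) :
  stopped_value Gamma g x s = if s ord0 \in Gamma then g (s ord0) else 0.
Proof. by rewrite /stopped_value /= enum_ordSl enum_ord0 /=; case: (s ord0 \in Gamma). Qed.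

Lemma stopped_value_default n x y (s : {ffun 'I_n.+1 -> T}) :
  stopped_value Gamma g x s = stopped_value Gamma g y s.
Proof.
rewrite /stopped_value; case: ifP => // has_s.
by congr (g _); apply: set_nth_default; rewrite -has_find.
Qed.

Lemma stopped_value_fcons n x y (t : {ffun 'I_n.+1 -> T}) :
  stopped_value Gamma g x (fcons y t) =
  if y \in Gamma then g y else stopped_value Gamma g x t.
Proof.
rewrite /stopped_value.
have -> : [seq fcons y t i | i <- enum 'I_n.+2] = y :: [seq t j | j <- enum 'I_n.+1].
  rewrite enum_ordSl /= fcons0 -map_comp; congr (_ :: _).
  by apply: eq_map => j /=; rewrite fconsS.
by rewrite /=; case: (y \in Gamma).
Qed.

End StoppedValue.

Section PathSpace.
Variables (R : realType) (T : finType) (W : T -> T -> R) (p : R) (Gamma : {set T}).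
Variables (a b : T -> T) (g : T -> R).
Local Notation P := (trans W p Gamma a b).
Local Notation path_prob := (path_prob W p Gamma a b).

Lemma path_prob0 x (s : {ffun 'I_1 -> T}) : path_prob x s = (s ord0 == x)%:R.
Proof. by rewrite /path_prob big_ord0 mulr1. Qed.

Lemma path_prob_start n x (t : {ffun 'I_n.+1 -> T}) :
  path_prob x t = (t ord0 == x)%:R * path_prob (t ord0) t.
Proof. by rewrite /path_prob eqxx mul1r. Qed.

Lemma path_prob_fcons n x y (t : {ffun 'I_n.+1 -> T}) :
  path_prob x (fcons y t) = (y == x)%:R * P y (t ord0) * path_prob (t ord0) t.
Proof.
rewrite {1}/path_prob big_ord_recl fcons0 -mulrA /path_prob eqxx mul1r.
congr (_ * (_ * _)).
  have -> : widen_ord (leqnSn n.+1) ord0 = ord0 :> 'I_n.+2 by apply: val_inj.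
  by rewrite fcons0 fconsS.
apply: eq_bigr => i _.
have -> : widen_ord (leqnSn n.+1) (lift ord0 i) = lift ord0 (widen_ord (leqnSn n) i).
  exact: val_inj.
by rewrite !fconsS.
Qed.

Lemma sum_path_prob_step n x (F : {ffun 'I_n.+2 -> T} -> R) :
  \sum_s path_prob x s * F s = \sum_y P x y * \sum_t path_prob y t * F (fcons x t).
Proof.
rewrite big_ffunS (bigD1 x) //= [X in _ + X]big1 ?addr0 => [|y /negPf yNx]; last first.
  by apply: big1 => t _; rewrite path_prob_fcons yNx !mul0r.
under eq_bigr do rewrite path_prob_fcons eqxx mul1r.
under [RHS]eq_bigr do rewrite big_distrr /=.
rewrite [RHS]exchange_big /=; apply: eq_bigr => t _.
rewrite (bigD1 (t ord0)) //= big1 ?addr0 ?mulrA // => y /negPf tNy.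
by rewrite path_prob_start eq_sym tNy !mul0r mulr0.
Qed.

Hypothesis P_sum1 : forall x, \sum_y P x y = 1.

Lemma sum_path_prob n x : \sum_(t : {ffun 'I_n.+1 -> T}) path_prob x t = 1.
Proof.
elim: n x => [|n IH] x.
  rewrite big_ffun1 (bigD1 x) //= [X in _ + X]big1 ?addr0 => [|y /negPf yNx];
    by rewrite path_prob0 ffunE ?eqxx ?yNx.
under eq_bigr do rewrite -[path_prob _ _]mulr1.
rewrite sum_path_prob_step -[RHS](P_sum1 x); apply: eq_bigr => y _.
by under eq_bigr do rewrite mulr1; rewrite IH mulr1.
Qed.

Lemma stopped_exp0 x :
  stopped_exp W p Gamma a b g x 0 = if x \in Gamma then g x else 0.
Proof.
rewrite /stopped_exp big_ffun1 (bigD1 x) //= [X in _ + X]big1 ?addr0 => [|y /negPf yNx].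
  by rewrite path_prob0 stopped_value0 !ffunE eqxx mul1r.
by rewrite path_prob0 ffunE yNx mul0r.
Qed.

Lemma stopped_expS n x :
  stopped_exp W p Gamma a b g x n.+1 =
  if x \in Gamma then g x else \sum_y P x y * stopped_exp W p Gamma a b g y n.
Proof.
rewrite /stopped_exp sum_path_prob_step.
under eq_bigr do under eq_bigr do rewrite stopped_value_fcons.
case: ifP => _.
  under eq_bigr do rewrite -big_distrl /= sum_path_prob mul1r.
  by rewrite -big_distrl /= P_sum1 mul1r.
apply: eq_bigr => y _; congr (_ * _); apply: eq_bigr => t _.
by rewrite (stopped_value_default _ _ x y).
Qed.

Lemma stopped_exp_iter n x :
  stopped_exp W p Gamma a b g x n =
  iter n (absorb Gamma P) (fun y => if y \in Gamma then g y else 0) x.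
Proof.
elim: n x => [|n IH] x; first exact: stopped_exp0.
rewrite stopped_expS; case: ifP => xG; first by rewrite iter_absorb_in // xG.
rewrite iterS /absorb -/(absorb Gamma P) xG.
by apply: eq_bigr => y _; rewrite IH.
Qed.

End PathSpace.

Lemma alpha_range (R : realFieldType) (p : R) : 2 <= p -> 0 < 1 / (p - 1) <= 1.
Proof.
move=> p_ge2; have p1_ge1 : 1 <= p - 1 by rewrite lerBrDr.
have p1_gt0 : 0 < p - 1 := lt_le_trans ltr01 p1_ge1.
by rewrite divr_gt0 //= ler_pdivrMr // mul1r.
Qed.

Section Graph.
Variables (R : realType) (T : finType) (W : T -> T -> R).

Lemma deg_gt0 x y : (forall x y, 0 <= W x y) -> y \in nbrs W x -> 0 < deg W x.
Proof.
move=> W_ge0; rewrite inE => Wxy; rewrite /deg (bigD1 y) //=.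
by apply: lt_le_trans Wxy _; rewrite lerDl sumr_ge0.
Qed.

Lemma minN_le u x y : y \in nbrs W x -> minN W u x <= u y.
Proof. by move=> yN; rewrite /minN (bigD1 y) //= ge_min lexx. Qed.

Lemma maxN_le u x c y : y \in nbrs W x ->
  (forall z, z \in nbrs W x -> u z <= c) -> maxN W u x <= c.
Proof.
move=> yN le_uc; rewrite /maxN; apply: (big_ind (fun v => v <= c)) => //.
- by case: pickP => [z /le_uc //|/(_ y)]; rewrite yN.
- by move=> v w vc wc; rewrite ge_max vc wc.
Qed.

End Graph.

Section Kernel.
Variables (R : realType) (T : finType) (W : T -> T -> R) (p : R) (Gamma : {set T}).
Variables (a b : T -> T).
Local Notation P := (trans W p Gamma a b).
Local Notation alpha := (1 / (p - 1)).

Hypothesis W_ge0 : forall x y, 0 <= W x y.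
Hypothesis b_nbrs : forall z, z \notin Gamma -> b z \in nbrs W z :&: Gamma.

Lemma deg_notin_gt0 x : x \notin Gamma -> 0 < deg W x.
Proof. by move=> /b_nbrs; rewrite inE => /andP[/(deg_gt0 W_ge0)]. Qed.

Lemma trans_sum1 x : \sum_y P x y = 1.
Proof.
rewrite /trans; have [xG|xNG] := boolP (x \in Gamma).
  by rewrite (bigD1 x) //= eqxx big1 ?addr0 // => y; rewrite eq_sym => /negPf ->.
rewrite !big_split /= -!big_distrr /= -mulr_suml divff ?gt_eqF ?deg_notin_gt0 //.
rewrite (bigD1 (a x)) //= eqxx big1 ?addr0 => [|y /negPf -> //].
rewrite (bigD1 (b x)) //= eqxx big1 ?addr0 => [|y /negPf -> //].
by rewrite !mulr1; lra.
Qed.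

Hypothesis p_ge2 : 2 <= p.

Lemma trans_ge0 x y : 0 <= P x y.
Proof.
rewrite /trans; case: ifP => // /negbT xNG.
have /andP[/ltW al_ge0 al_le1] := alpha_range p_ge2.
have c_ge0 : 0 <= (1 - alpha) / 2 by rewrite divr_ge0 // subr_ge0.
do 2?apply: addr_ge0; apply: mulr_ge0 => //; rewrite ?ler0n // divr_ge0 // ltW //.
exact: deg_notin_gt0.
Qed.

Lemma trans_escape_gt0 x : x \notin Gamma -> 0 < P x (b x).
Proof.
move=> xNG; have /andP[al_gt0 al_le1] := alpha_range p_ge2.
have := b_nbrs xNG; rewrite !inE => /andP[Wxb _].
have c_ge0 : 0 <= (1 - alpha) / 2 by rewrite divr_ge0 // subr_ge0.
have rw_gt0 : 0 < alpha * (W x (b x) / deg W x).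
  by rewrite mulr_gt0 // divr_gt0 // deg_notin_gt0.
rewrite /trans (negbTE xNG) eqxx mulr1.
have : 0 <= (1 - alpha) / 2 * (b x == a x)%:R by rewrite mulr_ge0.
lra.
Qed.

Lemma sum_trans_notin u x : x \notin Gamma ->
  \sum_y P x y * u y =
  u x - Lp W p u x + (1 - alpha) / 2 * ((u (a x) - maxN W u x) + (u (b x) - minN W u x)).
Proof.
move=> xNG; have d_neq0 : deg W x != 0 by rewrite gt_eqF ?deg_notin_gt0.
rewrite /trans /Lp (negbTE xNG).
under eq_bigr do rewrite !mulrDl.
rewrite !big_split /= !sum_mul_indicator.
set S := \sum_y W x y * u y.
have -> : \sum_y alpha * (W x y / deg W x) * u y = alpha * ((deg W x)^-1 * S).
  by rewrite /S !mulr_sumr; apply: eq_bigr => y _; ring.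
have -> : \sum_y W x y * (u x - u y) = deg W x * u x - S.
  by rewrite /deg mulr_suml -sumrB; apply: eq_bigr => y _; rewrite mulrBr.
rewrite mulrBr mulKf //; ring.
Qed.

Lemma Lp_zero_subharmonic u : (forall x, x \notin Gamma -> Lp W p u x = 0) ->
    (forall z, z \notin Gamma ->
       a z \in nbrs W z /\ (forall y, y \in nbrs W z -> u y <= u (a z))) ->
  forall y, u y <= absorb Gamma P u y.
Proof.
move=> Lp_u0 a_max y; rewrite /absorb; case: ifP => // /negbT yNG.
have /andP[_ al_le1] := alpha_range p_ge2.
have [aN le_ua] := a_max y yNG.
have := b_nbrs yNG; rewrite inE => /andP[bN _].
rewrite sum_trans_notin // Lp_u0 // subr0 lerDl mulr_ge0 ?divr_ge0 ?subr_ge0 //.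
by rewrite addr_ge0 // subr_ge0 ?(maxN_le aN le_ua) ?minN_le.
Qed.

End Kernel.

Theorem mainTheorem3 (R : realType) (T : finType) (W : T -> T -> R)
    (p : R) (Gamma : {set T}) (g u : T -> R) (a b : T -> T) (x : T) :
  weighted_connected_graph W ->
  2 <= p ->
  A1 W Gamma ->
  solves_P W p Gamma g u ->
  (forall z, z \notin Gamma ->
     a z \in nbrs W z /\ (forall y, y \in nbrs W z -> u y <= u (a z))) ->
  (forall z, z \notin Gamma ->
     b z \in nbrs W z :&: Gamma /\
     (forall y, y \in nbrs W z :&: Gamma -> g (b z) <= g y)) ->
  exists l : R,
    stopped_exp W p Gamma a b g x @ \oo --> l /\
    u x - g x <= l - g x.
Proof.
move=> [_ W_ge0 _] p_ge2 _ [Lp_u0 u_eq_g] a_max b_min.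
have b_nbrs z (zNG : z \notin Gamma) := (b_min z zNG).1.
have b_in z : z \notin Gamma -> b z \in Gamma by move=> /b_nbrs; rewrite inE => /andP[].
have P_ge0 y z : 0 <= trans W p Gamma a b y z by exact: trans_ge0.
have P_sum1 y : \sum_z trans W p Gamma a b y z = 1 by exact: trans_sum1.
have [q /andP[q_ge0 q_lt1] escape] :
    exists2 q, 0 <= q < 1 & forall z, z \notin Gamma -> 1 - trans W p Gamma a b z (b z) <= q.
  apply: uniform_lt1_bound => z zNG.
  by rewrite ltrBlDr ltrDl trans_escape_gt0.
set h := fun y => if y \in Gamma then g y else 0.
have -> : stopped_exp W p Gamma a b g x =
    fun n => iter n (absorb Gamma (trans W p Gamma a b)) h x.
  by apply/funext => n; rewrite stopped_exp_iter.
exists (lim (iter n (absorb Gamma (trans W p Gamma a b)) h x @[n --> \oo])).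
split; first exact: (iter_absorb_cvg P_ge0 P_sum1 b_in escape q_ge0 q_lt1).
rewrite lerD2r; apply: (le_lim_iter_absorb P_ge0 P_sum1 b_in escape q_ge0 q_lt1).
  exact: Lp_zero_subharmonic.
by move=> z zG; rewrite /h zG u_eq_g.
Qed.
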